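(* Let $H$ be a selfadjoint operator on a separable Hilbert space $\mathcal H$ with spectral family $\{E_\lambda\}_{\lambda\in\mathbb R}$. Let $f,g\in\mathcal H$ and $\lambda\in\mathbb R$, and suppose $\mu\mapsto\langle E_\mu f|g\rangle$ is differentiable at $\lambda$. Then for every $\chi\in C_0^\infty(\mathbb R)$ the function $\mu\mapsto\langle E_\mu\chi(H)f|g\rangle$ is differentiable at $\lambda$ and $$\frac{d\langle E_\lambda\chi(H)f|g\rangle}{d\lambda}=\chi(\lambda)\frac{d\langle E_\lambda f|g\rangle}{d\lambda}.$$
   Context: Here $C_0^\infty(\mathbb R)$ denotes the set of infinitely differentiable complex-valued functions on $\mathbb R$ such that the function and all its derivatives tend to zero at infinity. Inner products are linear in the first argument. *)

From Stdlib Require Import Reals.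
From Coquelicot Require Import Coquelicot.
Open Scope R_scope.

Record Hilbert := {
  hs :> Type;
  hzero : hs;
  hadd : hs -> hs -> hs;
  hopp : hs -> hs;
  hscal : C -> hs -> hs;
  hip : hs -> hs -> C;
  hadd_assoc : forall u v w, hadd u (hadd v w) = hadd (hadd u v) w;
  hadd_comm : forall u v, hadd u v = hadd v u;
  hadd_0 : forall u, hadd u hzero = u;
  hadd_opp : forall u, hadd u (hopp u) = hzero;
  hscal_1 : forall u, hscal (RtoC 1) u = u;
  hscal_assoc : forall a b u, hscal a (hscal b u) = hscal (Cmult a b) u;
  hscal_addr : forall a u v, hscal a (hadd u v) = hadd (hscal a u) (hscal a v);
  hscal_addl : forall a b u, hscal (Cplus a b) u = hadd (hscal a u) (hscal b u);
  hip_addl : forall u v w, hip (hadd u v) w = Cplus (hip u w) (hip v w);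
  hip_scall : forall a u v, hip (hscal a u) v = Cmult a (hip u v);
  hip_conj : forall u v, hip v u = Cconj (hip u v);
  hip_pos : forall u, 0 <= Re (hip u u);
  hip_def : forall u, hip u u = RtoC 0 -> u = hzero;
  hcomplete : forall s : nat -> hs,
    (forall eps, 0 < eps -> exists N, forall m n, (N <= m)%nat -> (N <= n)%nat ->
       sqrt (Re (hip (hadd (s m) (hopp (s n))) (hadd (s m) (hopp (s n))))) < eps) ->
    exists l, forall eps, 0 < eps -> exists N, forall n, (N <= n)%nat ->
       sqrt (Re (hip (hadd (s n) (hopp l)) (hadd (s n) (hopp l)))) < eps;
  hseparable : exists d : nat -> hs, forall u eps, 0 < eps -> exists n,
       sqrt (Re (hip (hadd u (hopp (d n))) (hadd u (hopp (d n))))) < eps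
}.

Arguments hzero {_}. Arguments hadd {_}. Arguments hopp {_}.
Arguments hscal {_}. Arguments hip {_}.

Definition hsub {Hs : Hilbert} (u v : Hs) : Hs := hadd u (hopp v).
Definition hnorm {Hs : Hilbert} (u : Hs) : R := sqrt (Re (hip u u)).

Definition is_linear {Hs : Hilbert} (P : Hs -> Hs) : Prop :=
  (forall u v, P (hadd u v) = hadd (P u) (P v)) /\
  (forall a u, P (hscal a u) = hscal a (P u)).

Definition is_orth_proj {Hs : Hilbert} (P : Hs -> Hs) : Prop :=
  is_linear P /\ (forall u, P (P u) = P u) /\ (forall u v, hip (P u) v = hip u (P v)).

Definition spectral_family {Hs : Hilbert} (E : R -> Hs -> Hs) : Prop :=
  (forall l, is_orth_proj (E l)) /\
  (forall l m u, E l (E m u) = E (Rmin l m) u) /\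
  (forall l u eps, 0 < eps -> exists del, 0 < del /\
       forall m, l <= m < l + del -> hnorm (hsub (E m u) (E l u)) < eps) /\
  (forall u eps, 0 < eps -> exists M, forall m,
       (m <= - M -> hnorm (E m u) < eps) /\ (M <= m -> hnorm (hsub (E m u) u) < eps)).

(* Riemann--Stieltjes sum for the tagged partition t 0 <= xi 0 <= t 1 <= ... <= t n *)
Fixpoint RSsum (phi F : R -> C) (t xi : nat -> R) (n : nat) : C :=
  match n with
  | O => RtoC 0
  | S k => Cplus (RSsum phi F t xi k) (Cmult (phi (xi k)) (Cminus (F (t (S k))) (F (t k))))
  end.

Definition is_RS (phi F : R -> C) (a b : R) (I : C) : Prop :=
  a <= b /\
  forall eps, 0 < eps -> exists del, 0 < del /\
    forall (n : nat) (t xi : nat -> R),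
      t O = a -> t n = b ->
      (forall i, (i < n)%nat -> t i <= xi i <= t (S i) /\ t (S i) - t i < del) ->
      Cmod (Cminus (RSsum phi F t xi n) I) < eps.

Definition is_RS_R (phi F : R -> C) (I : C) : Prop :=
  forall eps, 0 < eps -> exists M, forall a b, a <= - M -> M <= b ->
    exists J, is_RS phi F a b J /\ Cmod (Cminus J I) < eps.

(* H defined on the domain D (values of H outside D are irrelevant) *)
Definition selfadjoint {Hs : Hilbert} (D : Hs -> Prop) (H : Hs -> Hs) : Prop :=
  D hzero /\
  (forall u v, D u -> D v -> D (hadd u v) /\ H (hadd u v) = hadd (H u) (H v)) /\
  (forall a u, D u -> D (hscal a u) /\ H (hscal a u) = hscal a (H u)) /\
  (forall u eps, 0 < eps -> exists v, D v /\ hnorm (hsub u v) < eps) /\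
  (* H^* = H, including equality of domains:
     (g in D(H^* ) and H^* g = h)  <->  (g in D(H) and h = H g) *)
  (forall g h, (forall f, D f -> hip (H f) g = hip f h) <-> (D g /\ h = H g)).

Definition spectral_family_of {Hs : Hilbert} (D : Hs -> Prop) (H : Hs -> Hs)
    (E : R -> Hs -> Hs) : Prop :=
  spectral_family E /\
  (forall f, D f <-> exists I, is_RS_R (fun l => RtoC (l * l)) (fun m => hip (E m f) f) I) /\
  (forall f g, D f -> is_RS_R (fun l => RtoC l) (fun m => hip (E m f) g) (hip (H f) g)).

(* X = chi(H) = int chi(lambda) dE_lambda (functional calculus, weak form:
   <X u|v> = int chi(lambda) d<E_lambda u|v> for all u, v; this determines X uniquely) *)
Definition is_fun_calc {Hs : Hilbert} (E : R -> Hs -> Hs) (chi : R -> C) (X : Hs -> Hs) : Prop :=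
  forall u v, is_RS_R chi (fun m => hip (E m u) v) (hip (X u) v).

Definition smooth_vanishing (h : R -> R) : Prop :=
  (forall n x, ex_derive_n h n x) /\
  (forall n, is_lim (Derive_n h n) p_infty 0 /\ is_lim (Derive_n h n) m_infty 0).

Definition C0inf (chi : R -> C) : Prop :=
  smooth_vanishing (fun x => Re (chi x)) /\ smooth_vanishing (fun x => Im (chi x)).

(* Since E_mu E_m = E_(min mu m), the function G(mu) = <E_mu chi(H) f|g> is the
   Stieltjes integral of chi against m |-> <E_(min mu m) f|g>, so for p < q the
   increment G(q) - G(p) is a limit of Stieltjes sums of chi against
   F(m) = <E_m f|g> over partitions of [p, q].  Near lam, chi is Lipschitz and F
   is affine up to o(|m - lam|); splitting chi = chi(lam) + (chi - chi(lam)) and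
   summing the remainder of F by parts bounds every such sum by
   chi(lam) F'(lam) (q - p) + o(q - p), uniformly in the partition. *)

From Stdlib Require Import Reals Lra Lia FunctionalExtensionality.
From Coquelicot Require Import Coquelicot.
Open Scope R_scope.

Lemma is_derive_C_iff (F : R -> C) (x : R) (l : C) :
  is_derive F x l <->
  forall eps, 0 < eps -> exists del, 0 < del /\ forall y, Rabs (y - x) < del ->
    Cmod (F y - F x - RtoC (y - x) * l)%C <= eps * Rabs (y - x).
Proof.
  set (V := prod_NormedModule R_AbsRing R_NormedModule R_NormedModule).
  assert (Herr : forall y, @norm _ V (@minus V (@minus V (F y) (F x))
                      (@scal _ V (@minus (AbsRing_NormedModule R_AbsRing) y x) l))
                           = Cmod (F y - F x - RtoC (y - x) * l)%C).
  { intros y. rewrite Cmod_norm. f_equal. apply injective_projections; simpl;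
    unfold minus, plus, opp, scal; simpl; unfold plus, opp, scal, mult; simpl; ring. }
  split.
  - intros [_ Hd] eps Heps.
    destruct (Hd x (fun P HP => HP) (mkposreal eps Heps)) as [del Hdel].
    exists del; split; [apply cond_pos|]. intros y Hy.
    specialize (Hdel y Hy). simpl in Hdel. rewrite Herr in Hdel. exact Hdel.
  - intros Hc. split; [apply is_linear_scal_l|]. intros x0 Hx.
    rewrite <- (is_filter_lim_locally_unique (K:=R_AbsRing) (V:=R_NormedModule) _ _ Hx).
    intros [eps Heps]. destruct (Hc eps Heps) as [del [Hdel Hy]].
    exists (mkposreal del Hdel). intros y Hball.
    simpl. rewrite Herr. exact (Hy y Hball).
Qed.

Lemma Cmod_le_Re_Im (z : C) : Cmod z <= Rabs (Re z) + Rabs (Im z).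
Proof.
  replace z with (RtoC (Re z) + RtoC (Im z) * Ci)%C at 1
    by (destruct z; apply injective_projections; simpl; ring).
  eapply Rle_trans; [apply Cmod_triangle|].
  rewrite Cmod_mult, !Cmod_R, Cmod_Ci. lra.
Qed.

Lemma Cmod_sub_le (a b : C) : Cmod (a - b)%C <= Cmod a + Cmod b.
Proof. unfold Cminus. rewrite <- (Cmod_opp b). apply Cmod_triangle. Qed.

Lemma locally_lipschitz_of_continuous_Derive (h : R -> R) (lam : R) :
  (forall x, ex_derive h x) -> continuous (Derive h) lam ->
  exists L del, 0 <= L /\ 0 < del /\ forall x y,
    Rabs (x - lam) <= del -> Rabs (y - lam) <= del -> Rabs (h x - h y) <= L * Rabs (x - y).
Proof.
  intros Hh Hcont.
  destruct (Hcont (ball (Derive h lam) (mkposreal 1 Rlt_0_1))) as [del Hdel];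
    [apply locally_ball|].
  exists (Rabs (Derive h lam) + 1), (del / 2).
  split; [pose proof (Rabs_pos (Derive h lam)); lra|].
  split; [pose proof (cond_pos del); lra|].
  intros x y Hx Hy.
  destruct (MVT_gen h y x (Derive h)) as [c [Hc ->]].
  - intros z _. apply Derive_correct, Hh.
  - intros z _. apply continuity_pt_filterlim. exact (ex_derive_continuous h z (Hh z)).
  - rewrite Rabs_mult. apply Rmult_le_compat_r; [apply Rabs_pos|].
    assert (Hcl : Rabs (c - lam) < del).
    { apply Rabs_le_between in Hx, Hy. pose proof (cond_pos del).
      destruct (Rle_dec y x).
      - rewrite Rmin_left, Rmax_right in Hc by lra. apply Rabs_lt_between; lra.
      - rewrite Rmin_right, Rmax_left in Hc by lra. apply Rabs_lt_between; lra. }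
    specialize (Hdel c Hcl). change (Rabs (Derive h c - Derive h lam) < 1) in Hdel.
    pose proof (Rabs_triang_inv (Derive h c) (Derive h lam)). lra.
Qed.

Lemma C0inf_locally_lipschitz (chi : R -> C) (lam : R) :
  C0inf chi ->
  exists L del, 0 <= L /\ 0 < del /\ forall x y,
    Rabs (x - lam) <= del -> Rabs (y - lam) <= del -> Cmod (chi x - chi y)%C <= L * Rabs (x - y).
Proof.
  intros [[HRe _] [HIm _]].
  destruct (locally_lipschitz_of_continuous_Derive (fun x => Re (chi x)) lam
    (fun x => HRe 1%nat x) (ex_derive_continuous _ _ (HRe 2%nat lam)))
    as [L1 [d1 [HL1 [Hd1 Lip1]]]].
  destruct (locally_lipschitz_of_continuous_Derive (fun x => Im (chi x)) lam
    (fun x => HIm 1%nat x) (ex_derive_continuous _ _ (HIm 2%nat lam)))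
    as [L2 [d2 [HL2 [Hd2 Lip2]]]].
  exists (L1 + L2), (Rmin d1 d2). split; [lra|]. split; [apply Rmin_pos; lra|].
  intros x y Hx Hy.
  pose proof (Rmin_l d1 d2). pose proof (Rmin_r d1 d2).
  specialize (Lip1 x y ltac:(lra) ltac:(lra)). specialize (Lip2 x y ltac:(lra) ltac:(lra)).
  eapply Rle_trans; [apply Cmod_le_Re_Im|]. unfold Re, Im, Rminus in *. simpl. lra.
Qed.

Lemma partition_mono (t : nat -> R) n :
  (forall i, (i < n)%nat -> t i <= t (S i)) ->
  forall i j, (i <= j <= n)%nat -> t i <= t j.
Proof.
  intros Ht i j. induction j as [|j IH]; intros Hij.
  - replace i with O by lia. lra.
  - destruct (Nat.eq_dec i (S j)) as [->|Hne]; [lra|].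
    specialize (IH ltac:(lia)). specialize (Ht j ltac:(lia)). lra.
Qed.

Lemma RSsum_shift_integrand (phi F : R -> C) (k : C) t xi n :
  RSsum phi F t xi n =
  (k * (F (t n) - F (t O)) + RSsum (fun x => phi x - k) F t xi n)%C.
Proof. induction n as [|n IH]; simpl; [ring | rewrite IH; ring]. Qed.

Lemma RSsum_add_integrator (phi F G : R -> C) t xi n :
  RSsum phi (fun x => F x + G x)%C t xi n = (RSsum phi F t xi n + RSsum phi G t xi n)%C.
Proof. induction n as [|n IH]; simpl; [ring | rewrite IH; ring]. Qed.

Lemma RSsum_sub_integrator (phi F G : R -> C) t xi n :
  RSsum phi (fun x => F x - G x)%C t xi n = (RSsum phi F t xi n - RSsum phi G t xi n)%C.
Proof. induction n as [|n IH]; simpl; [ring | rewrite IH; ring]. Qed.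

Lemma RSsum_integrator_ext (phi F G : R -> C) (c : C) t xi n :
  (forall i, (i <= n)%nat -> F (t i) = (G (t i) + c)%C) ->
  RSsum phi F t xi n = RSsum phi G t xi n.
Proof.
  induction n as [|n IH]; intros HFG; simpl; [reflexivity|].
  rewrite IH by (intros i Hi; apply HFG; lia).
  rewrite !HFG by lia. ring.
Qed.

Lemma RSsum_const_integrator (phi : R -> C) (c : C) t xi n :
  RSsum phi (fun _ => c) t xi n = RtoC 0.
Proof. induction n as [|n IH]; simpl; [reflexivity | rewrite IH; ring]. Qed.

Lemma RSsum_app (phi F : R -> C) t xi k m :
  RSsum phi F t xi (k + m) =
  (RSsum phi F t xi k + RSsum phi F (fun i => t (k + i)%nat) (fun i => xi (k + i)%nat) m)%C.
Proof.
  induction m as [|m IH]; simpl.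
  - rewrite Nat.add_0_r. ring.
  - rewrite Nat.add_succ_r. simpl. rewrite IH. ring.
Qed.

Lemma RSsum_by_parts (phi F : R -> C) t n :
  (RSsum phi F t t n + RSsum F phi t (fun i => t (S i)) n)%C =
  (phi (t n) * F (t n) - phi (t O) * F (t O))%C.
Proof.
  induction n as [|n IH]; simpl; [ring|].
  replace (RSsum phi F t t n) with
    (phi (t n) * F (t n) - phi (t O) * F (t O) - RSsum F phi t (fun i => t (S i)) n)%C
    by (rewrite <- IH; ring).
  ring.
Qed.

Lemma Cmod_RSsum_le (phi F : R -> C) (t xi : nat -> R) n (B L : R) :
  (forall i, (i < n)%nat -> Cmod (phi (xi i)) <= B) ->
  (forall i, (i < n)%nat -> Cmod (F (t (S i)) - F (t i))%C <= L * (t (S i) - t i)) ->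
  Cmod (RSsum phi F t xi n) <= B * L * (t n - t O).
Proof.
  induction n as [|n IH]; intros Hphi HF; simpl.
  - rewrite Cmod_0. lra.
  - eapply Rle_trans; [apply Cmod_triangle|]. rewrite Cmod_mult.
    assert (Hn : Cmod (phi (xi n)) * Cmod (F (t (S n)) - F (t n))%C <= B * (L * (t (S n) - t n))).
    { apply Rmult_le_compat; try apply Cmod_ge_0; auto. }
    specialize (IH ltac:(intros i Hi; apply Hphi; lia) ltac:(intros i Hi; apply HF; lia)).
    lra.
Qed.

Lemma RSsum_Rmin_diff (phi F : R -> C) (t xi : nat -> R) k m j :
  (forall i, (i < k + m + j)%nat -> t i <= t (S i)) ->
  (RSsum phi (fun x => F (Rmin (t (k + m)%nat) x)) t xi (k + m + j)
   - RSsum phi (fun x => F (Rmin (t k) x)) t xi (k + m + j))%C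
  = RSsum phi F (fun i => t (k + i)%nat) (fun i => xi (k + i)%nat) m.
Proof.
  intros Ht. pose proof (partition_mono t _ Ht) as Hmono.
  rewrite <- RSsum_sub_integrator, <- Nat.add_assoc, !RSsum_app.
  rewrite (RSsum_integrator_ext _ _ (fun _ => RtoC 0) (RtoC 0) t xi k).
  2:{ intros i Hi. rewrite !Rmin_right by (apply Hmono; lia). ring. }
  rewrite (RSsum_integrator_ext _ _ F (- F (t k))%C _ _ m).
  2:{ intros i Hi. rewrite Rmin_right by (apply Hmono; lia).
      rewrite Rmin_left by (apply Hmono; lia). ring. }
  rewrite (RSsum_integrator_ext _ _ (fun _ => RtoC 0) (F (t (k + m)%nat) - F (t k))%C _ _ j).
  2:{ intros i Hi. rewrite !Rmin_left by (apply Hmono; lia). ring. }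
  rewrite !RSsum_const_integrator. ring.
Qed.

Lemma is_RS_R_RSsum_close (phi F : R -> C) (I : C) (eps : R) :
  is_RS_R phi F I -> 0 < eps ->
  exists M, forall a b, a <= - M -> M <= b -> exists del, 0 < del /\
    forall n t, t O = a -> t n = b ->
      (forall i, (i < n)%nat -> t i <= t (S i) /\ t (S i) - t i < del) ->
      Cmod (RSsum phi F t t n - I)%C < eps.
Proof.
  intros HI Heps.
  destruct (HI (eps / 2) ltac:(lra)) as [M HM]. exists M. intros a b Ha Hb.
  destruct (HM a b Ha Hb) as [J [[_ HJ] HJI]].
  destruct (HJ (eps / 2) ltac:(lra)) as [del [Hdel HS]].
  exists del. split; [exact Hdel|]. intros n t Ht0 Htn Ht.
  replace (RSsum phi F t t n - I)%C with ((RSsum phi F t t n - J) + (J - I))%C by ring.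
  eapply Rle_lt_trans; [apply Cmod_triangle|].
  pose proof (HS n t t Ht0 Htn ltac:(intros i Hi; specialize (Ht i Hi); lra)). lra.
Qed.

Lemma RSsum_approx_increment (chi F G : R -> C) (p q eta : R) :
  (forall mu, is_RS_R chi (fun x => F (Rmin mu x)) (G mu)) -> p < q -> 0 < eta ->
  exists n t, t O = p /\ t n = q /\ (forall i, (i < n)%nat -> t i <= t (S i)) /\
    Cmod (G q - G p - RSsum chi F t t n)%C < eta.
Proof.
  intros HG Hpq Heta.
  destruct (is_RS_R_RSsum_close _ _ _ (eta / 2) (HG q) ltac:(lra)) as [Mq HMq].
  destruct (is_RS_R_RSsum_close _ _ _ (eta / 2) (HG p) ltac:(lra)) as [Mp HMp].
  set (u := q - p).
  destruct (INR_archimed u (Rabs Mq + Rabs Mp + Rabs p + Rabs q)) as [K HK]; [unfold u; lra|].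
  set (a := p - INR K * u). set (b := q + INR K * u).
  assert (Hab : a <= - Mq /\ a <= - Mp /\ Mq <= b /\ Mp <= b).
  { unfold a, b. pose proof (Rle_abs Mq). pose proof (Rle_abs Mp).
    pose proof (Rabs_maj2 Mq). pose proof (Rabs_maj2 Mp).
    pose proof (Rle_abs p). pose proof (Rabs_maj2 p).
    pose proof (Rle_abs q). pose proof (Rabs_maj2 q).
    lra. }
  destruct (HMq a b ltac:(lra) ltac:(lra)) as [dq [Hdq HSq]].
  destruct (HMp a b ltac:(lra) ltac:(lra)) as [dp [Hdp HSp]].
  destruct (INR_archimed (Rmin dq dp) u) as [N HN]; [apply Rmin_pos; lra|].
  assert (HN0 : (0 < N)%nat) by (destruct N; [simpl in HN; unfold u in HN; lra | lia]).
  assert (HNr : 0 < INR N) by (apply lt_0_INR; exact HN0).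
  set (s := u / INR N).
  assert (Hs : 0 < s) by (unfold s, u; apply Rdiv_lt_0_compat; lra).
  assert (Hsd : s < Rmin dq dp) by (unfold s; apply Rlt_div_l; lra).
  (* A uniform grid of [a, b] having p and q as nodes: on it the two Stieltjes
     sums for q and p differ exactly by a Stieltjes sum of F over [p, q]. *)
  set (t := fun i : nat => a + INR i * s).
  set (n := (K * N + N + K * N)%nat).
  assert (Htp : t (K * N)%nat = p) by (unfold t, a, s; rewrite mult_INR; field; lra).
  assert (Htq : t (K * N + N)%nat = q)
    by (unfold t, a, s, u; rewrite plus_INR, mult_INR; field; lra).
  assert (Hta : t O = a) by (unfold t; simpl; ring).
  assert (Htb : t n = b) by (unfold t, n, b, a, s, u; rewrite !plus_INR, !mult_INR; field; lra).
  assert (Hstep : forall i, t (S i) = t i + s) by (intros i; unfold t; rewrite S_INR; ring).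
  pose proof (Rmin_l dq dp). pose proof (Rmin_r dq dp).
  specialize (HSq n t Hta Htb ltac:(intros i _; rewrite Hstep; lra)).
  specialize (HSp n t Hta Htb ltac:(intros i _; rewrite Hstep; lra)).
  pose proof (RSsum_Rmin_diff chi F t t (K * N) N (K * N)
    ltac:(intros i _; rewrite Hstep; lra)) as Hdiff.
  rewrite Htq, Htp in Hdiff. fold n in Hdiff.
  exists N, (fun i => t (K * N + i)%nat). repeat split.
  - rewrite Nat.add_0_r. exact Htp.
  - exact Htq.
  - intros i _. cbv beta. rewrite Nat.add_succ_r, Hstep. lra.
  - rewrite <- Hdiff.
    set (Sq := RSsum chi (fun x => F (Rmin q x)) t t n) in *.
    set (Sp := RSsum chi (fun x => F (Rmin p x)) t t n) in *.
    replace (G q - G p - (Sq - Sp))%C with ((Sp - G p) - (Sq - G q))%C by ring.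
    eapply Rle_lt_trans; [apply Cmod_sub_le|]. lra.
Qed.

Definition centered (chi : R -> C) (lam x : R) : C := (chi x - chi lam)%C.

Definition affine_rem (F : R -> C) (lam : R) (d : C) (x : R) : C :=
  (F x - F lam - RtoC (x - lam) * d)%C.

(* F is only differentiable at lam, so the increments of its remainder are not
   controlled; summation by parts moves them onto the centered integrand. *)
Lemma RSsum_affine_decomp (chi F : R -> C) (lam : R) (d : C) t n :
  let c := centered chi lam in let r := affine_rem F lam d in
  (RSsum chi F t t n - chi lam * d * RtoC (t n - t O))%C =
  (RSsum c (fun x => RtoC x * d) t t n
   + (c (t n) * r (t n) - c (t O) * r (t O) - RSsum r c t (fun i => t (S i)) n)
   + chi lam * (r (t n) - r (t O)))%C.
Proof.
  intros c r.
  rewrite (RSsum_shift_integrand chi F (chi lam)).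
  rewrite (RSsum_integrator_ext c F (fun x => RtoC x * d + r x)%C (F lam - RtoC lam * d)%C)
    by (intros i _; unfold r, affine_rem; rewrite RtoC_minus; ring).
  rewrite RSsum_add_integrator, <- (RSsum_by_parts c r t n).
  unfold r, affine_rem. rewrite !RtoC_minus. ring.
Qed.

Section LocalEstimate.

Variables (chi F : R -> C) (lam p q : R) (d : C) (L e : R) (t : nat -> R) (n : nat).
Hypothesis Ht0 : t O = p.
Hypothesis Htn : t n = q.
Hypothesis Ht : forall i, (i < n)%nat -> t i <= t (S i).
Hypothesis Hlam : p <= lam <= q.
Hypothesis HL : 0 <= L.
Hypothesis Hchi : forall x y, p <= x <= q -> p <= y <= q ->
  Cmod (chi x - chi y)%C <= L * Rabs (x - y).
Hypothesis HF : forall x, p <= x <= q -> Cmod (affine_rem F lam d x) <= e * (q - p).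

Lemma RSsum_local_error_le :
  Cmod (RSsum chi F t t n - chi lam * d * RtoC (q - p))%C <=
  (L * Cmod d * (q - p) + e * (3 * L * (q - p) + 2 * Cmod (chi lam))) * (q - p).
Proof.
  pose proof (RSsum_affine_decomp chi F lam d t n) as Hdecomp. simpl in Hdecomp.
  rewrite Ht0, Htn in Hdecomp. rewrite Hdecomp.
  set (c := centered chi lam) in *. set (r := affine_rem F lam d) in *.
  assert (Hpts : forall i, (i <= n)%nat -> p <= t i <= q).
  { intros i Hi. rewrite <- Ht0, <- Htn.
    split; apply (partition_mono t n Ht); lia. }
  assert (Hc : forall x, p <= x <= q -> Cmod (c x) <= L * (q - p)).
  { intros x Hx. eapply Rle_trans; [apply Hchi; lra|].
    apply Rmult_le_compat_l; [lra|]. apply Rabs_le; lra. }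
  assert (B1 : Cmod (RSsum c (fun x => RtoC x * d)%C t t n) <= L * (q - p) * Cmod d * (q - p)).
  { rewrite <- Htn at 2. rewrite <- Ht0 at 2. apply Cmod_RSsum_le.
    - intros i Hi. apply Hc, Hpts. lia.
    - intros i Hi.
      replace (RtoC (t (S i)) * d - RtoC (t i) * d)%C with (RtoC (t (S i) - t i) * d)%C
        by (rewrite RtoC_minus; ring).
      rewrite Cmod_mult, Cmod_R, Rabs_pos_eq by (specialize (Ht i Hi); lra). lra. }
  assert (B2 : Cmod (RSsum r c t (fun i => t (S i)) n) <= e * (q - p) * L * (q - p)).
  { rewrite <- Htn at 2. rewrite <- Ht0 at 2. apply Cmod_RSsum_le.
    - intros i Hi. apply HF, Hpts. lia.
    - intros i Hi. unfold c, centered.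
      replace (chi (t (S i)) - chi lam - (chi (t i) - chi lam))%C
        with (chi (t (S i)) - chi (t i))%C by ring.
      rewrite <- (Rabs_pos_eq (t (S i) - t i)) by (specialize (Ht i Hi); lra).
      apply Hchi; apply Hpts; lia. }
  assert (B3 : forall x, p <= x <= q -> Cmod (c x * r x)%C <= L * (q - p) * (e * (q - p))).
  { intros x Hx. rewrite Cmod_mult.
    apply Rmult_le_compat; try apply Cmod_ge_0; auto. }
  assert (B4 : Cmod (chi lam * (r q - r p))%C <= Cmod (chi lam) * (2 * (e * (q - p)))).
  { rewrite Cmod_mult. apply Rmult_le_compat_l; [apply Cmod_ge_0|].
    pose proof (Cmod_sub_le (r q) (r p)).
    pose proof (HF q ltac:(lra)). pose proof (HF p ltac:(lra)).
    lra. }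
  pose proof (B3 q ltac:(lra)). pose proof (B3 p ltac:(lra)).
  pose proof (Cmod_triangle (RSsum c (fun x => RtoC x * d)%C t t n
    + (c q * r q - c p * r p - RSsum r c t (fun i => t (S i)) n)) (chi lam * (r q - r p))).
  pose proof (Cmod_triangle (RSsum c (fun x => RtoC x * d)%C t t n)
    (c q * r q - c p * r p - RSsum r c t (fun i => t (S i)) n)).
  pose proof (Cmod_sub_le (c q * r q - c p * r p) (RSsum r c t (fun i => t (S i)) n)).
  pose proof (Cmod_sub_le (c q * r q) (c p * r p)).
  nra.
Qed.

End LocalEstimate.

Section RSRminDerivative.

Variables (chi F G : R -> C) (lam : R) (d : C) (L del0 : R).
Hypothesis HL : 0 <= L.
Hypothesis Hdel0 : 0 < del0.
Hypothesis Hlip : forall x y, Rabs (x - lam) <= del0 -> Rabs (y - lam) <= del0 ->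
  Cmod (chi x - chi y)%C <= L * Rabs (x - y).
Hypothesis HF : is_derive F lam d.
Hypothesis HG : forall mu, is_RS_R chi (fun x => F (Rmin mu x)) (G mu).

Lemma RS_Rmin_increment_error_le p q e :
  p <= lam <= q -> q - p <= del0 ->
  (forall x, p <= x <= q -> Cmod (affine_rem F lam d x) <= e * (q - p)) ->
  Cmod (G q - G p - chi lam * d * RtoC (q - p))%C <=
  (L * Cmod d * (q - p) + e * (3 * L * (q - p) + 2 * Cmod (chi lam))) * (q - p).
Proof.
  intros Hlam Hpq Hrem.
  destruct (Req_dec p q) as [<- | Hneq].
  { replace (G p - G p - chi lam * d * RtoC (p - p))%C with (RtoC 0)
      by (rewrite RtoC_minus; ring).
    rewrite Cmod_0, Rminus_diag, Rmult_0_r. lra. }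
  apply Rle_plus_epsilon. intros eta Heta.
  destruct (RSsum_approx_increment chi F G p q eta HG ltac:(lra) Heta)
    as [n [t [Ht0 [Htn [Ht Happrox]]]]].
  assert (Hlip_pq : forall x y, p <= x <= q -> p <= y <= q ->
             Cmod (chi x - chi y)%C <= L * Rabs (x - y)).
  { intros x y Hx Hy. apply Hlip; apply Rabs_le; lra. }
  pose proof (RSsum_local_error_le chi F lam p q d L e t n Ht0 Htn Ht Hlam HL Hlip_pq Hrem).
  replace (G q - G p - chi lam * d * RtoC (q - p))%C
    with ((G q - G p - RSsum chi F t t n) + (RSsum chi F t t n - chi lam * d * RtoC (q - p)))%C
    by ring.
  eapply Rle_trans; [apply Cmod_triangle|]. lra.
Qed.

Lemma RS_Rmin_increment_le eps : 0 < eps ->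
  exists del, 0 < del /\ forall p q, p <= lam <= q -> q - p < del ->
    Cmod (G q - G p - chi lam * d * RtoC (q - p))%C <= eps * (q - p).
Proof.
  intros Heps.
  set (K := Cmod (chi lam)). pose proof (Cmod_ge_0 (chi lam)) as HK. fold K in HK.
  pose proof (Cmod_ge_0 d) as Hd.
  set (e := eps / (2 * (3 * L + 2 * K + 1))).
  assert (He : 0 < e) by (unfold e; apply Rdiv_lt_0_compat; lra).
  assert (HeK : e * (3 * L + 2 * K) <= eps / 2).
  { unfold e. apply (Rmult_le_reg_r (2 * (3 * L + 2 * K + 1))); [lra|].
    field_simplify; [nra | lra]. }
  destruct (proj1 (is_derive_C_iff F lam d) HF e He) as [del1 [Hdel1 HF1]].
  set (del2 := eps / (2 * (L * Cmod d + 1))).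
  assert (Hdel2 : 0 < del2) by (unfold del2; apply Rdiv_lt_0_compat; nra).
  assert (HLd : L * Cmod d * del2 <= eps / 2).
  { unfold del2. apply (Rmult_le_reg_r (2 * (L * Cmod d + 1))); [nra|].
    field_simplify; nra. }
  exists (Rmin (Rmin del0 del1) (Rmin del2 1)).
  split; [repeat apply Rmin_pos; lra|].
  intros p q Hlam Hpq.
  pose proof (Rmin_l (Rmin del0 del1) (Rmin del2 1)).
  pose proof (Rmin_r (Rmin del0 del1) (Rmin del2 1)).
  pose proof (Rmin_l del0 del1). pose proof (Rmin_r del0 del1).
  pose proof (Rmin_l del2 1). pose proof (Rmin_r del2 1).
  assert (Hrem : forall x, p <= x <= q -> Cmod (affine_rem F lam d x) <= e * (q - p)).
  { intros x Hx. assert (Hxl : Rabs (x - lam) <= q - p) by (apply Rabs_le; lra).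
    eapply Rle_trans; [apply HF1; lra|]. apply Rmult_le_compat_l; lra. }
  pose proof (RS_Rmin_increment_error_le p q e Hlam ltac:(lra) Hrem) as Hinc. fold K in Hinc.
  assert (Herr : L * Cmod d * (q - p) + e * (3 * L * (q - p) + 2 * K) <= eps).
  { assert (L * Cmod d * (q - p) <= L * Cmod d * del2)
      by (apply Rmult_le_compat_l; nra).
    assert (e * (3 * L * (q - p)) <= e * (3 * L)) by (apply Rmult_le_compat_l; nra).
    nra. }
  assert (Hu : 0 <= q - p) by lra.
  pose proof (Rmult_le_compat_r (q - p) _ _ Hu Herr). lra.
Qed.

Lemma is_derive_RS_Rmin : is_derive G lam (chi lam * d)%C.
Proof.
  apply is_derive_C_iff. intros eps Heps.
  destruct (RS_Rmin_increment_le eps Heps) as [del [Hdel Hinc]].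
  exists del. split; [exact Hdel|]. intros y Hy.
  destruct (Rle_or_lt lam y) as [Hly | Hyl].
  - rewrite Rabs_pos_eq in Hy |- * by lra.
    replace (G y - G lam - RtoC (y - lam) * (chi lam * d))%C
      with (G y - G lam - chi lam * d * RtoC (y - lam))%C by ring.
    apply Hinc; lra.
  - rewrite Rabs_left in Hy |- * by lra.
    replace (G y - G lam - RtoC (y - lam) * (chi lam * d))%C
      with (- (G lam - G y - chi lam * d * RtoC (lam - y)))%C
      by (rewrite !RtoC_minus; ring).
    rewrite Cmod_opp. replace (- (y - lam)) with (lam - y) by ring.
    apply Hinc; lra.
Qed.

End RSRminDerivative.

Lemma spectral_family_hip_Rmin {Hs : Hilbert} (E : R -> Hs -> Hs) (u v : Hs) (mu m : R) :
  spectral_family E -> hip (E m u) (E mu v) = hip (E (Rmin mu m) u) v.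
Proof.
  intros [Hproj [Hmin _]].
  destruct (Hproj mu) as [_ [_ Hsym]]. rewrite <- Hsym, Hmin. reflexivity.
Qed.

Lemma fun_calc_spectral_Rmin {Hs : Hilbert} (E : R -> Hs -> Hs) (chi : R -> C)
    (X : Hs -> Hs) (f g : Hs) (mu : R) :
  spectral_family E -> is_fun_calc E chi X ->
  is_RS_R chi (fun m => hip (E (Rmin mu m) f) g) (hip (E mu (X f)) g).
Proof.
  intros HE Hfc.
  replace (fun m => hip (E (Rmin mu m) f) g) with (fun m => hip (E m f) (E mu g))
    by (apply functional_extensionality; intros m; apply spectral_family_hip_Rmin, HE).
  destruct (proj1 HE mu) as [_ [_ Hsym]]. rewrite Hsym. apply Hfc.
Qed.

Theorem mainTheorem8 (Hs : Hilbert) (D : Hs -> Prop) (H : Hs -> Hs)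
  (E : R -> Hs -> Hs) (f g : Hs) (lam : R) (d : C) (chi : R -> C) (X : Hs -> Hs) :
  selfadjoint D H ->
  spectral_family_of D H E ->
  is_derive (fun m : R => hip (E m f) g) lam d ->
  C0inf chi ->
  is_fun_calc E chi X ->
  is_derive (fun m : R => hip (E m (X f)) g) lam (Cmult (chi lam) d).
Proof.
  (* Only the spectral family and the functional calculus enter; H itself does not. *)
  intros _ [HE _] Hder Hchi Hfc.
  destruct (C0inf_locally_lipschitz chi lam Hchi) as [L [del [HL [Hdel Hlip]]]].
  apply (is_derive_RS_Rmin chi (fun m => hip (E m f) g) _ lam d L del HL Hdel Hlip Hder).
  intros mu. exact (fun_calc_spectral_Rmin E chi X f g mu HE Hfc).
Qed.
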